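(* Fix $u_{\max}>0$, $u^*\in[0,u_{\max}]$, $u_b\in[0,u_{\max}]$, $C\ge 0$, and consider the problem (P1): $\min_{s\in\mathcal C_a}\{s^2: p(s)\le -C\}$ where $p(s)=g(s,u_b)$. Let $\delta=\min\{u^*,\hat u\}$, $m=\frac{2u^*+u_{\max}}4$. (i) If $u^*\ne\hat u$: $p'<0$ on $[0,\delta)\cup(\gamma,u_{\max}]$ and $p'>0$ on $(\delta,\gamma)$, where $\gamma=\max\{u^*,\hat u\}$. Moreover: if $p(0)\le -C$, the optimal solution of (P1) is $s=0$; if $p(\delta)\le -C<p(0)$, the optimal solution is the smallest root of $p(s)=-C$ in $\mathcal C_a$ (which lies in $(0,\delta]$); if $-C<p(\delta)$, (P1) is infeasible. (ii) If $u^*=\hat u$: $p'<0$ on $[0,u_{\max}]\setminus\{\hat u\}$ and $p'(\hat u)=0$. Moreover: if $p(0)\le -C$, the optimal solution is $s=0$; if $p(m)\le -C<p(0)$, the optimal solution is the unique root of $p(s)=-C$ in $(0,m]$; if $-C<p(m)$, (P1) is infeasible.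
   Context: $f(u)=u(1-u/u_{\max})$ on $[0,u_{\max}]$, $\hat u=u_{\max}/2$ its unique maximizer, $F$ a primitive of $f$, $g(s,z)=(s-u^* )f(s)-(z-u^* )f(z)-F(s)+F(z)$, and $\mathcal C_a=[0,\frac{2u^*+u_{\max}}4]$. *)

From Stdlib Require Import Reals Lra.
From Coquelicot Require Import Coquelicot.
Open Scope R_scope.

Definition f (umax u : R) : R := u * (1 - u / umax).
(* a primitive of f (any primitive gives the same g, constants cancel) *)
Definition F (umax u : R) : R := u ^ 2 / 2 - u ^ 3 / (3 * umax).
(* unique maximizer of f *)
Definition uhat (umax : R) : R := umax / 2.

Definition g (umax ustar s z : R) : R :=
  (s - ustar) * f umax s - (z - ustar) * f umax z - F umax s + F umax z.

Definition p (umax ustar ub s : R) : R := g umax ustar s ub.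

Definition mC (umax ustar : R) : R := (2 * ustar + umax) / 4.

Definition Ca (umax ustar s : R) : Prop := 0 <= s <= mC umax ustar.

Definition P1_feasible (umax ustar ub C s : R) : Prop :=
  Ca umax ustar s /\ p umax ustar ub s <= - C.

Definition P1_optimal (umax ustar ub C s : R) : Prop :=
  P1_feasible umax ustar ub C s /\
  forall t, P1_feasible umax ustar ub C t -> s ^ 2 <= t ^ 2.

Definition P1_infeasible (umax ustar ub C : R) : Prop :=
  ~ exists s, P1_feasible umax ustar ub C s.

(* p'(s) = (s - u* ) (1 - 2 s / umax) has the sign of (s - u* ) (û - s), so p decreases
   on [0, δ], increases on [δ, γ], and since the right end point of C_a is the midpoint
   of u* and û, the minimum of p over C_a is attained at δ (in case (ii), δ = m = û).
   On [0, δ] the map p is a strictly decreasing continuous bijection onto [p δ, p 0],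
   so the smallest feasible point of (P1) is 0 when p 0 ≤ -C, the unique root of
   p = -C in (0, δ] when p δ ≤ -C < p 0, and does not exist when -C < p δ. *)
From Pilot Require Import Defs.
From Stdlib Require Import Reals Lra Psatz.
From Coquelicot Require Import Coquelicot.
Open Scope R_scope.

Lemma derive_neg_strict_decreasing (h h' : R -> R) (a b : R) :
  (forall x, is_derive h x (h' x)) -> (forall c, a < c < b -> h' c < 0) ->
  forall x y, a <= x -> x < y -> y <= b -> h y < h x.
Proof.
  intros Dh Hneg x y Hx Hxy Hy.
  destruct (MVT_cor2 h h' x y Hxy) as [c [Hmvt Hc]].
  { intros c _; apply is_derive_Reals, Dh. }
  pose proof (Hneg c ltac:(lra)); nra.
Qed.

Lemma derive_pos_strict_increasing (h h' : R -> R) (a b : R) :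
  (forall x, is_derive h x (h' x)) -> (forall c, a < c < b -> 0 < h' c) ->
  forall x y, a <= x -> x < y -> y <= b -> h x < h y.
Proof.
  intros Dh Hpos x y Hx Hxy Hy.
  destruct (MVT_cor2 h h' x y Hxy) as [c [Hmvt Hc]].
  { intros c _; apply is_derive_Reals, Dh. }
  pose proof (Hpos c ltac:(lra)); nra.
Qed.

Lemma decreasing_root (h h' : R -> R) (a b v : R) :
  (forall x, is_derive h x (h' x)) -> a < b -> h b <= v < h a ->
  exists s, a < s <= b /\ h s = v.
Proof.
  intros Dh Hab Hv.
  assert (Hcont : continuity h).
  { intros x; apply derivable_continuous_pt; exists (h' x); apply is_derive_Reals, Dh. }
  destruct (IVT_gen h a b v Hcont) as [s [Hs Hhs]].
  { rewrite Rmin_right, Rmax_left; lra. }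
  rewrite Rmin_left, Rmax_right in Hs by lra.
  exists s; split; [|exact Hhs].
  split; [|lra]. destruct (Req_dec s a) as [->|]; lra.
Qed.

Lemma mul_sub_neg_outside (a b c : R) :
  c < Rmin a b \/ Rmax a b < c -> (c - a) * (b - c) < 0.
Proof.
  pose proof (Rmin_Rmax_l a b); pose proof (Rmin_Rmax_r a b).
  intros [Hc|Hc]; nra.
Qed.

Lemma mul_sub_pos_between (a b c : R) :
  Rmin a b < c < Rmax a b -> 0 < (c - a) * (b - c).
Proof.
  destruct (Rle_or_lt a b) as [Hab|Hab].
  - rewrite Rmin_left, Rmax_right by lra; nra.
  - rewrite Rmin_right, Rmax_left by lra; nra.
Qed.

Section P1.

Variables umax ustar ub C : R.
Hypothesis Humax : 0 < umax.
Hypothesis Hustar : 0 <= ustar <= umax.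

Let pp := p umax ustar ub.
Let delta := Rmin ustar (uhat umax).
Let gamma := Rmax ustar (uhat umax).

Definition p_deriv (s : R) : R := (s - ustar) * (uhat umax - s) * (2 / umax).

Lemma is_derive_p (s : R) : is_derive pp s (p_deriv s).
Proof. unfold pp, p, g, Defs.f, F, p_deriv, uhat; auto_derive; [lra|]; field; lra. Qed.

Lemma Derive_p (s : R) : Derive pp s = p_deriv s.
Proof. exact (is_derive_unique _ _ _ (is_derive_p s)). Qed.

Lemma p_deriv_neg (s : R) : (s - ustar) * (uhat umax - s) < 0 -> p_deriv s < 0.
Proof. assert (0 < 2 / umax) by (apply Rdiv_lt_0_compat; lra). unfold p_deriv; nra. Qed.

Lemma p_deriv_pos (s : R) : 0 < (s - ustar) * (uhat umax - s) -> 0 < p_deriv s.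
Proof. assert (0 < 2 / umax) by (apply Rdiv_lt_0_compat; lra). unfold p_deriv; nra. Qed.

Lemma delta_nonneg : 0 <= delta.
Proof. apply Rmin_glb; unfold uhat; lra. Qed.

Lemma mC_between : delta <= mC umax ustar <= gamma.
Proof.
  pose proof (Rmin_Rmax_l ustar (uhat umax)); pose proof (Rmin_Rmax_r ustar (uhat umax)).
  unfold delta, gamma, mC, uhat in *; lra.
Qed.

Lemma p_decreasing_below_delta (x y : R) :
  0 <= x -> x < y -> y <= delta -> pp y < pp x.
Proof.
  apply (derive_neg_strict_decreasing pp p_deriv 0 delta is_derive_p).
  intros c Hc; apply p_deriv_neg, mul_sub_neg_outside; left; unfold delta in Hc; lra.
Qed.

Lemma p_increasing_between (x y : R) :
  delta <= x -> x < y -> y <= gamma -> pp x < pp y.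
Proof.
  apply (derive_pos_strict_increasing pp p_deriv delta gamma is_derive_p).
  intros c Hc; apply p_deriv_pos, mul_sub_pos_between; exact Hc.
Qed.

Lemma p_injective_below_delta (x y : R) :
  0 <= x <= delta -> 0 <= y <= delta -> pp x = pp y -> x = y.
Proof.
  intros Hx Hy Hxy; destruct (Rtotal_order x y) as [H|[H|H]]; [|exact H|].
  - pose proof (p_decreasing_below_delta x y ltac:(lra) H ltac:(lra)); lra.
  - pose proof (p_decreasing_below_delta y x ltac:(lra) H ltac:(lra)); lra.
Qed.

Lemma p_min_on_Ca (t : R) : Ca umax ustar t -> pp delta <= pp t.
Proof.
  intros [Ht0 Htm]; pose proof mC_between as Hm.
  destruct (Rtotal_order t delta) as [Ht|[->|Ht]]; [| lra |].
  - pose proof (p_decreasing_below_delta t delta Ht0 Ht (Rle_refl _)); lra.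
  - pose proof (p_increasing_between delta t (Rle_refl _) Ht ltac:(lra)); lra.
Qed.

Lemma P1_optimal_least (s0 : R) :
  P1_feasible umax ustar ub C s0 ->
  (forall t, P1_feasible umax ustar ub C t -> s0 <= t) ->
  forall s, P1_optimal umax ustar ub C s <-> s = s0.
Proof.
  intros Hf Hleast s.
  assert (Hs0 : 0 <= s0) by (destruct Hf as [[Hs0 _] _]; exact Hs0).
  split.
  - intros [Hs Hopt]; pose proof (Hleast s Hs); pose proof (Hopt s0 Hf).
    destruct Hs as [[Hs _] _]; nra.
  - intros ->; split; [exact Hf|]; intros t Ht; pose proof (Hleast t Ht); nra.
Qed.

Lemma P1_optimal_zero : pp 0 <= - C -> forall s, P1_optimal umax ustar ub C s <-> s = 0.
Proof.
  intros Hp; apply P1_optimal_least.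
  - split; [|exact Hp]; unfold Ca, mC; lra.
  - intros t [[Ht _] _]; exact Ht.
Qed.

Lemma P1_optimal_root : pp delta <= - C < pp 0 ->
  exists s0, 0 < s0 <= delta /\ pp s0 = - C /\
    (forall t, Ca umax ustar t -> pp t <= - C -> s0 <= t) /\
    (forall s, P1_optimal umax ustar ub C s <-> s = s0).
Proof.
  intros Hp.
  assert (Hdelta : 0 < delta).
  { pose proof delta_nonneg; destruct (Req_dec delta 0) as [E|]; [rewrite E in Hp|]; lra. }
  destruct (decreasing_root pp p_deriv 0 delta (- C) is_derive_p Hdelta Hp) as [s0 [Hs0 Hroot]].
  assert (Hleast : forall t, Ca umax ustar t -> pp t <= - C -> s0 <= t).
  { intros t [Ht _] Hpt; destruct (Rle_or_lt s0 t) as [|Hts]; [assumption|].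
    pose proof (p_decreasing_below_delta t s0 Ht Hts ltac:(lra)); lra. }
  assert (HCa : Ca umax ustar s0) by (pose proof mC_between; unfold Ca; lra).
  exists s0; do 3 (split; [assumption|]).
  apply P1_optimal_least; [split; [exact HCa|fold pp; lra]|].
  intros t [Ht Hpt]; exact (Hleast t Ht Hpt).
Qed.

Lemma P1_infeasible_above : - C < pp delta -> P1_infeasible umax ustar ub C.
Proof. intros Hp [t [Ht Hpt]]; pose proof (p_min_on_Ca t Ht); fold pp in Hpt; lra. Qed.

End P1.

Theorem mainTheorem4 (umax ustar ub C : R)
  (Humax : 0 < umax) (Hustar : 0 <= ustar <= umax)
  (Hub : 0 <= ub <= umax) (HC : 0 <= C) :
  let delta := Rmin ustar (uhat umax) in
  let gamma := Rmax ustar (uhat umax) in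
  let m := mC umax ustar in
  let pp := p umax ustar ub in
  (* (i) *)
  (ustar <> uhat umax ->
     (forall s, (0 <= s < delta \/ gamma < s <= umax) -> Derive pp s < 0) /\
     (forall s, delta < s < gamma -> 0 < Derive pp s) /\
     (pp 0 <= - C -> forall s, P1_optimal umax ustar ub C s <-> s = 0) /\
     (pp delta <= - C < pp 0 ->
        exists s0, (0 < s0 <= delta) /\ Ca umax ustar s0 /\ pp s0 = - C /\
          (forall t, Ca umax ustar t -> pp t = - C -> s0 <= t) /\
          (forall s, P1_optimal umax ustar ub C s <-> s = s0)) /\
     (- C < pp delta -> P1_infeasible umax ustar ub C)) /\
  (* (ii) *)
  (ustar = uhat umax ->
     (forall s, 0 <= s <= umax -> s <> uhat umax -> Derive pp s < 0) /\
     Derive pp (uhat umax) = 0 /\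
     (pp 0 <= - C -> forall s, P1_optimal umax ustar ub C s <-> s = 0) /\
     (pp m <= - C < pp 0 ->
        exists s0, (0 < s0 <= m) /\ pp s0 = - C /\
          (forall t, 0 < t <= m -> pp t = - C -> t = s0) /\
          (forall s, P1_optimal umax ustar ub C s <-> s = s0)) /\
     (- C < pp m -> P1_infeasible umax ustar ub C)).
Proof.
  intros delta gamma m pp; subst delta gamma m pp.
  pose proof (mC_between umax ustar) as Hm.
  split; intros Hcase.
  - split; [intros s Hs; rewrite Derive_p by lra;
            apply p_deriv_neg, mul_sub_neg_outside; lra|].
    split; [intros s Hs; rewrite Derive_p by lra;
            apply p_deriv_pos; [lra|]; apply mul_sub_pos_between, Hs|].
    split; [now apply P1_optimal_zero|].
    split; [|now apply P1_infeasible_above].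
    intros Hp; destruct (P1_optimal_root umax ustar ub C Humax Hustar Hp)
      as [s0 [Hs0 [Hroot [Hleast Hopt]]]].
    exists s0; split; [exact Hs0|]; split; [unfold Ca; lra|].
    split; [exact Hroot|]; split; [|exact Hopt].
    intros t Ht Hpt; apply Hleast; [exact Ht|lra].
  - assert (Hmd : mC umax ustar = Rmin ustar (uhat umax))
      by (unfold mC; rewrite Hcase, Rmin_left by lra; unfold uhat; field).
    rewrite Hmd.
    split; [intros s _ Hs; rewrite Derive_p by lra; apply p_deriv_neg; [lra|];
            apply mul_sub_neg_outside; rewrite Hcase, Rmin_left, Rmax_left by lra;
            destruct (Rtotal_order s (uhat umax)) as [|[|]]; tauto|].
    split; [rewrite Derive_p by lra; unfold p_deriv; rewrite Hcase; ring|].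
    split; [now apply P1_optimal_zero|].
    split; [|now apply P1_infeasible_above].
    intros Hp; destruct (P1_optimal_root umax ustar ub C Humax Hustar Hp)
      as [s0 [Hs0 [Hroot [_ Hopt]]]].
    exists s0; split; [exact Hs0|]; split; [exact Hroot|]; split; [|exact Hopt].
    intros t Ht Hpt; apply (p_injective_below_delta umax ustar ub Humax); lra.
Qed.
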